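(* For $a,b>0$, with $D:=a\partial_a+b\partial_b$, $$\mathfrak H_{(0,0,0)}(a,b)=-[1,a,b]\log,\qquad \mathfrak H_{(0,1,0)}=-\partial_a\mathfrak H_{(0,0,0)},\qquad \mathfrak H_{(1,0,0)}=(D+2)\,\mathfrak H_{(0,0,0)},$$ $$\mathfrak H_{(2,0,0)}=\tfrac12(D+3)\,\mathfrak H_{(1,0,0)}=-\tfrac12(D+3)(D+2)[1,a,b]\log,\qquad \mathfrak H_{(1,1,0)}=-\partial_a\mathfrak H_{(1,0,0)}.$$
   Context: $\mathfrak H_\alpha(a,b):=\int_0^\infty x^{|\alpha|+1}(1+x)^{-\alpha_0-1}(1+ax)^{-\alpha_1-1}(1+bx)^{-\alpha_2-1}\,dx$ for $\alpha\in\mathbb N^3$, $a,b>0$, $|\alpha|=\alpha_0+\alpha_1+\alpha_2$. Divided differences: for $f$ smooth on an open interval, $[y_0]f=f(y_0)$, $[y_0,\dots,y_n]f=\int_{\{t\ge0,\sum t_j=1\}}f^{(n)}(\sum t_jy_j)\,dt_1\cdots dt_n$ (for distinct points $=\sum_kf(y_k)\prod_{j\ne k}(y_k-y_j)^{-1}$). *)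

From Stdlib Require Import Reals Lra Classical ClassicalEpsilon.
Open Scope R_scope.

(* A total choice of a value satisfying P (used to turn "the" derivative /
   "the" integral into functions; meaningful when the value exists uniquely). *)
Definition the_real (P : R -> Prop) : R := epsilon (inhabits 0) P.

Definition deriv (f : R -> R) (x : R) : R :=
  the_real (fun l => derivable_pt_lim f x l).

Definition pda (f : R -> R -> R) (a b : R) : R := deriv (fun x => f x b) a.
Definition pdb (f : R -> R -> R) (a b : R) : R := deriv (fun y => f a y) b.

Definition Dop (f : R -> R -> R) (a b : R) : R := a * pda f a b + b * pdb f a b.

Definition RInt (f : R -> R) (lo hi : R) : R :=
  the_real (fun l => exists pr : Riemann_integrable f lo hi, RiemannInt pr = l).

(* Divided difference [y0,y1,y2]f := integral over the simplex
   {t1,t2 >= 0, t1 + t2 <= 1} of f''(t0 y0 + t1 y1 + t2 y2), t0 = 1 - t1 - t2. *)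
Definition divdiff3 (f : R -> R) (y0 y1 y2 : R) : R :=
  RInt (fun t1 =>
          RInt (fun t2 => deriv (deriv f) ((1 - t1 - t2) * y0 + t1 * y1 + t2 * y2))
               0 (1 - t1))
       0 1.

Definition improper_int_0_inf (f : R -> R) (l : R) : Prop :=
  forall eps : R, eps > 0 -> exists M : R, forall T : R, T >= M ->
    exists pr : Riemann_integrable f 0 T, Rabs (RiemannInt pr - l) < eps.

Definition H_integrand (a0 a1 a2 : nat) (a b : R) (x : R) : R :=
  x ^ (a0 + a1 + a2 + 1)
  / ((1 + x) ^ (a0 + 1) * (1 + a * x) ^ (a1 + 1) * (1 + b * x) ^ (a2 + 1)).

Definition H (a0 a1 a2 : nat) (a b : R) : R :=
  the_real (improper_int_0_inf (H_integrand a0 a1 a2 a b)).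

Definition Glog (a b : R) : R := divdiff3 ln 1 a b.

Definition pdiff_a (f : R -> R -> R) (a b : R) : Prop :=
  exists l, derivable_pt_lim (fun x => f x b) a l.
Definition pdiff_b (f : R -> R -> R) (a b : R) : Prop :=
  exists l, derivable_pt_lim (fun y => f a y) b l.

(* The substitution x = t/(1-t) turns H_alpha(a,b) into
     K n p q a b = int_0^1 t^n (1 + t(a-1))^-p (1 + t(b-1))^-q dt
   with n = |alpha| + 1, p = alpha_1 + 1, q = alpha_2 + 1, an integral of a smooth function
   over a compact interval.  Differentiating under the integral sign gives
   d/da K n p q = -p K (n+1) (p+1) q, and integrating the derivative of
   t^(n+1) (1-t) / ((1 + t(a-1)) (1 + t(b-1))) over [0,1] gives the Euler-type relation
   (D + n + 1) K n 1 1 = n K (n+1) 1 1.  On the other side, the inner integral of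
   log'' = -1/y^2 in [1,a,b]log is elementary, and the substitution s = (1-t)/(1 + t(a-1))
   in the outer one shows [1,a,b]log = -K 1 1 1.  Every claimed identity is then a linear
   relation between these K's. *)
From Stdlib Require Import Reals Lra Lia ClassicalEpsilon.
From Pilot Require Import Defs.
From Coquelicot Require Import Coquelicot.
Open Scope R_scope.

Lemma the_real_unique (P : R -> Prop) (l : R) :
  P l -> (forall l1 l2, P l1 -> P l2 -> l1 = l2) -> the_real P = l.
Proof.
  intros Hl Hu. unfold the_real. apply Hu; [|exact Hl].
  apply epsilon_spec. now exists l.
Qed.

Lemma deriv_is_derive (f : R -> R) (x l : R) : is_derive f x l -> deriv f x = l.
Proof.
  intros Hf. apply the_real_unique; [now apply is_derive_Reals|].
  intros l1 l2 H1 H2. eapply uniqueness_limite; eauto.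
Qed.

Lemma Defs_RInt_eq_RInt (f : R -> R) (lo hi : R) :
  ex_RInt f lo hi -> Defs.RInt f lo hi = RInt f lo hi.
Proof.
  intros Hf. set (pr := ex_RInt_Reals_0 _ _ _ Hf). apply the_real_unique.
  - exists pr. now rewrite (RInt_Reals _ _ _ pr).
  - intros l1 l2 [p1 <-] [p2 <-]. apply RiemannInt_P5.
Qed.

Lemma improper_int_0_inf_unique (f : R -> R) (l1 l2 : R) :
  improper_int_0_inf f l1 -> improper_int_0_inf f l2 -> l1 = l2.
Proof.
  intros H1 H2. apply Rminus_diag_uniq, Rabs_eq_0.
  destruct (Rle_lt_or_eq_dec 0 (Rabs (l1 - l2)) (Rabs_pos _)) as [Hlt|Heq]; [|easy].
  exfalso. set (e := Rabs (l1 - l2) / 2).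
  destruct (H1 e ltac:(unfold e; lra)) as [M1 HM1].
  destruct (H2 e ltac:(unfold e; lra)) as [M2 HM2].
  destruct (HM1 (Rmax M1 M2) (Rle_ge _ _ (Rmax_l _ _))) as [p1 Hp1].
  destruct (HM2 (Rmax M1 M2) (Rle_ge _ _ (Rmax_r _ _))) as [p2 Hp2].
  rewrite (RiemannInt_P5 p2 p1) in Hp2.
  assert (Rabs (l1 - l2) <= Rabs (RiemannInt p1 - l1) + Rabs (RiemannInt p1 - l2)).
  { replace (l1 - l2) with (- (RiemannInt p1 - l1) + (RiemannInt p1 - l2)) by ring.
    rewrite <- (Rabs_Ropp (RiemannInt p1 - l1)). apply Rabs_triang. }
  unfold e in *. lra.
Qed.

Lemma the_improper_int_0_inf (f : R -> R) (l : R) :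
  improper_int_0_inf f l -> the_real (improper_int_0_inf f) = l.
Proof. intros Hf. apply the_real_unique; [exact Hf | apply improper_int_0_inf_unique]. Qed.

Ltac interval_bounds H := rewrite ?Rmin_left, ?Rmax_right in H by lra.

Definition K_integrand (n p q : nat) (a b t : R) : R :=
  t ^ n / ((1 + t * (a - 1)) ^ p * (1 + t * (b - 1)) ^ q).

Definition K (n p q : nat) (a b : R) : R := RInt (K_integrand n p q a b) 0 1.

Lemma lerp_pos (t a : R) : 0 <= t <= 1 -> 0 < a -> 0 < 1 + t * (a - 1).
Proof. intros. nra. Qed.

Lemma continuous_K_integrand (n p q : nat) (a b t : R) :
  0 < a -> 0 < b -> 0 <= t <= 1 -> continuous (K_integrand n p q a b) t.
Proof.
  intros Ha Hb Ht. assert (Hat := lerp_pos t a Ht Ha). assert (Hbt := lerp_pos t b Ht Hb).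
  apply (@ex_derive_continuous R_AbsRing R_NormedModule). unfold K_integrand. auto_derive.
  apply Rmult_integral_contrapositive; split; apply pow_nonzero; lra.
Qed.

Lemma ex_RInt_K_integrand (n p q : nat) (a b u v : R) :
  0 < a -> 0 < b -> 0 <= u -> u <= v -> v <= 1 -> ex_RInt (K_integrand n p q a b) u v.
Proof.
  intros Ha Hb Hu Huv Hv. apply (@ex_RInt_continuous R_CompleteNormedModule).
  intros t Ht. interval_bounds Ht. apply continuous_K_integrand; auto; lra.
Qed.

Lemma K_integrand_bounded (n p q : nat) (a b : R) : 0 < a -> 0 < b ->
  exists B, 0 < B /\ forall t, 0 <= t <= 1 -> Rabs (K_integrand n p q a b t) <= B.
Proof.
  intros Ha Hb.
  destruct (@bounded_continuity R_AbsRing R_NormedModule (K_integrand n p q a b) 0 1)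
    as [M HM]; [intros; now apply continuous_K_integrand|].
  exists (Rmax M 1). split; [apply (Rlt_le_trans _ 1); [lra | apply Rmax_r]|].
  intros t Ht. apply Rlt_le, (Rlt_le_trans _ M); [exact (HM t Ht) | apply Rmax_l].
Qed.

Lemma is_derive_K_integrand_a (n p q : nat) (b t u : R) :
  1 + t * (u - 1) <> 0 -> 1 + t * (b - 1) <> 0 ->
  is_derive (fun x => K_integrand n p q x b t) u (- INR p * K_integrand (S n) (S p) q u b t).
Proof.
  intros Hu Hb. unfold K_integrand. auto_derive; replace (u + - (1)) with (u - 1) by ring.
  - apply Rmult_integral_contrapositive; split; apply pow_nonzero; auto.
  - destruct p as [|p]; [simpl | rewrite S_INR; cbn [pred pow]];
      field; repeat split; auto using pow_nonzero.
Qed.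

Lemma continuity_2d_pt_lerp (f : R -> R -> R) (u t : R) :
  continuity_2d_pt f u t -> continuity_2d_pt (fun x s => 1 + s * (f x s - 1)) u t.
Proof.
  intros Hf. apply continuity_2d_pt_plus; [apply continuity_2d_pt_const|].
  apply continuity_2d_pt_mult; [apply continuity_2d_pt_id2|].
  apply continuity_2d_pt_minus; [exact Hf | apply continuity_2d_pt_const].
Qed.

Lemma continuity_2d_pt_K_integrand (n p q : nat) (b u t : R) :
  0 < u -> 0 < b -> 0 <= t <= 1 ->
  continuity_2d_pt (fun x s => K_integrand n p q x b s) u t.
Proof.
  intros Hu Hb Ht.
  assert (Hpow : forall (g : R -> R -> R) k,
      continuity_2d_pt g u t -> continuity_2d_pt (fun x s => g x s ^ k) u t).
  { intros g k Hg. apply (continuity_1d_2d_pt_comp (fun z => z ^ k)); auto.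
    apply derivable_continuous_pt, derivable_pt_pow. }
  unfold K_integrand, Rdiv. apply continuity_2d_pt_mult.
  - apply Hpow, continuity_2d_pt_id2.
  - apply continuity_2d_pt_inv.
    + apply continuity_2d_pt_mult; apply Hpow, continuity_2d_pt_lerp;
        [apply continuity_2d_pt_id1 | apply continuity_2d_pt_const].
    + apply Rmult_integral_contrapositive; split; apply pow_nonzero, Rgt_not_eq, lerp_pos; auto.
Qed.

Lemma is_derive_K_a (n p q : nat) (a b : R) : 0 < a -> 0 < b ->
  is_derive (fun x => K n p q x b) a (- INR p * K (S n) (S p) q a b).
Proof.
  intros Ha Hb.
  assert (HD : forall x t, 1 + t * (x - 1) <> 0 -> 1 + t * (b - 1) <> 0 ->
      Derive (fun u => K_integrand n p q u b t) x = - INR p * K_integrand (S n) (S p) q x b t).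
  { intros x t Hx Hbt. now apply is_derive_unique, is_derive_K_integrand_a. }
  replace (- INR p * K (S n) (S p) q a b)
    with (RInt (fun t => Derive (fun u => K_integrand n p q u b t) a) 0 1).
  - apply (is_derive_RInt_param (fun u t => K_integrand n p q u b t)).
    + apply (filter_imp (fun x => 0 < x)); [|exact (open_gt 0 a Ha)].
      intros x Hx t Ht. interval_bounds Ht. eexists.
      apply is_derive_K_integrand_a; apply Rgt_not_eq, lerp_pos; auto.
    + intros t Ht. interval_bounds Ht.
      apply continuity_2d_pt_ext_loc with
        (f := fun u s => - INR p * K_integrand (S n) (S p) q u b s).
      * assert (Ha' := continuity_2d_pt_neq_0 _ a t
          (continuity_2d_pt_lerp _ a t (continuity_2d_pt_id1 a t))).
        assert (Hb' := continuity_2d_pt_neq_0 _ a t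
          (continuity_2d_pt_lerp _ a t (continuity_2d_pt_const a t b))).
        apply locally_2d_impl with (2 := locally_2d_and _ _ _ _
          (Ha' (Rgt_not_eq _ _ (lerp_pos t a Ht Ha))) (Hb' (Rgt_not_eq _ _ (lerp_pos t b Ht Hb)))).
        apply locally_2d_forall. intros u s [Hu Hs]. symmetry. now apply HD.
      * apply continuity_2d_pt_mult; [apply continuity_2d_pt_const|].
        now apply continuity_2d_pt_K_integrand.
    + apply (filter_imp (fun x => 0 < x)); [|exact (open_gt 0 a Ha)].
      intros x Hx. apply ex_RInt_K_integrand; auto; lra.
  - unfold K. change (- INR p * ?I) with (scal (- INR p) I).
    rewrite <- (RInt_scal (V := R_CompleteNormedModule))
      by (apply ex_RInt_K_integrand; auto; lra).
    apply RInt_ext. intros t Ht. interval_bounds Ht.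
    apply HD; apply Rgt_not_eq, lerp_pos; auto; lra.
Qed.

Lemma K_swap (n p q : nat) (a b : R) : K n p q a b = K n q p b a.
Proof. unfold K. apply RInt_ext. intros t _. unfold K_integrand. f_equal. ring. Qed.

Lemma is_derive_K_b (n p q : nat) (a b : R) : 0 < a -> 0 < b ->
  is_derive (fun y => K n p q a y) b (- INR q * K (S n) p (S q) a b).
Proof.
  intros Ha Hb. rewrite K_swap.
  apply (is_derive_ext (fun y => K n q p y a)); [intros; apply K_swap|].
  now apply is_derive_K_a.
Qed.

(* Integrate d/dt [t^(n+1) (1 - t) / ((1 + t (a - 1)) (1 + t (b - 1)))] over [0,1];
   with [is_derive_K_a] and [is_derive_K_b] this reads (D + n + 1) K n 1 1 = n K (n+1) 1 1. *)
Lemma K_euler (n : nat) (a b : R) : 0 < a -> 0 < b ->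
  INR (S n) * K n 1 1 a b - INR n * K (S n) 1 1 a b
  - a * K (S n) 2 1 a b - b * K (S n) 1 2 a b = 0.
Proof.
  intros Ha Hb.
  set (F := fun t => t ^ S n * (1 - t) / ((1 + t * (a - 1)) * (1 + t * (b - 1)))).
  set (f := fun t => INR (S n) * K_integrand n 1 1 a b t - INR n * K_integrand (S n) 1 1 a b t
                     - a * K_integrand (S n) 2 1 a b t - b * K_integrand (S n) 1 2 a b t).
  assert (HF : is_RInt f 0 1 (F 1 - F 0)).
  { apply (@is_RInt_derive R_CompleteNormedModule).
    - intros t Ht. interval_bounds Ht.
      assert (Hat := lerp_pos t a Ht Ha). assert (Hbt := lerp_pos t b Ht Hb).
      unfold F, f, K_integrand. auto_derive.
      + apply Rmult_integral_contrapositive; split; lra.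
      + replace (match n with 0%nat => 1 | S _ => INR n + 1 end) with (INR n + 1)
          by (destruct n; simpl; ring).
        rewrite S_INR. cbn [pow]. field. split; lra.
    - intros t Ht. interval_bounds Ht.
      assert (Hat := lerp_pos t a Ht Ha). assert (Hbt := lerp_pos t b Ht Hb).
      apply (@ex_derive_continuous R_AbsRing R_NormedModule). unfold f, K_integrand.
      auto_derive. simpl. repeat split; repeat (apply Rmult_integral_contrapositive; split); lra. }
  assert (Hf : is_RInt f 0 1 (INR (S n) * K n 1 1 a b - INR n * K (S n) 1 1 a b
                              - a * K (S n) 2 1 a b - b * K (S n) 1 2 a b)).
  { unfold f, K.
    apply (@is_RInt_minus R_NormedModule); [apply (@is_RInt_minus R_NormedModule);
      [apply (@is_RInt_minus R_NormedModule)|]|];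
      apply (@is_RInt_scal R_NormedModule), (RInt_correct (V := R_CompleteNormedModule)),
        ex_RInt_K_integrand; auto; lra. }
  rewrite <- (is_RInt_unique _ _ _ _ Hf), (is_RInt_unique _ _ _ _ HF).
  unfold F. simpl. field. lra.
Qed.

(* The substitution x = t / (1 - t), i.e. t = x / (1 + x), dx = dt / (1 - t)^2; the powers
   of 1 + x cancel because (a0 + 1) + (a1 + 1) + (a2 + 1) = (a0 + a1 + a2 + 1) + 2. *)
Lemma H_integrand_subst (a0 a1 a2 : nat) (a b x : R) : 0 < a -> 0 < b -> 0 <= x ->
  H_integrand a0 a1 a2 a b x
  = / (1 + x) ^ 2 * K_integrand (a0 + a1 + a2 + 1) (S a1) (S a2) a b (x / (1 + x)).
Proof.
  intros Ha Hb Hx. unfold H_integrand, K_integrand.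
  assert (Hu : forall k, (1 + x) ^ k <> 0) by (intros; apply pow_nonzero; lra).
  assert (Hau : forall k, (1 + a * x) ^ k <> 0) by (intros; apply pow_nonzero; nra).
  assert (Hbu : forall k, (1 + b * x) ^ k <> 0) by (intros; apply pow_nonzero; nra).
  replace (1 + x / (1 + x) * (a - 1)) with ((1 + a * x) * / (1 + x)) by (field; lra).
  replace (1 + x / (1 + x) * (b - 1)) with ((1 + b * x) * / (1 + x)) by (field; lra).
  replace (a1 + 1)%nat with (S a1) by lia. replace (a2 + 1)%nat with (S a2) by lia.
  unfold Rdiv. rewrite !Rpow_mult_distr, !pow_inv.
  assert (Hpow : (1 + x) ^ 2 * (1 + x) ^ (a0 + a1 + a2 + 1)
                 = (1 + x) ^ (a0 + 1) * (1 + x) ^ S a1 * (1 + x) ^ S a2).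
  { rewrite <- !pow_add. f_equal. lia. }
  replace ((1 + x) ^ (a0 + 1))
    with ((1 + x) ^ 2 * (1 + x) ^ (a0 + a1 + a2 + 1) / ((1 + x) ^ S a1 * (1 + x) ^ S a2))
    by (rewrite Hpow; field; auto).
  field. repeat split; auto; lra.
Qed.

Lemma ex_RInt_H_integrand (a0 a1 a2 : nat) (a b T : R) : 0 < a -> 0 < b -> 0 <= T ->
  ex_RInt (H_integrand a0 a1 a2 a b) 0 T.
Proof.
  intros Ha Hb HT. apply (@ex_RInt_continuous R_CompleteNormedModule).
  intros x Hx. interval_bounds Hx.
  assert (0 < 1 + a * x) by nra. assert (0 < 1 + b * x) by nra.
  apply (@ex_derive_continuous R_AbsRing R_NormedModule). unfold H_integrand. auto_derive.
  repeat (apply Rmult_integral_contrapositive; split); apply pow_nonzero; lra.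
Qed.

Lemma div_one_add_unit_interval (x : R) : 0 <= x -> 0 <= x / (1 + x) <= 1.
Proof. intros Hx. split; [apply Rdiv_le_0_compat | rewrite <- Rdiv_le_1]; lra. Qed.

Lemma RInt_H_integrand (a0 a1 a2 : nat) (a b T : R) : 0 < a -> 0 < b -> 0 <= T ->
  RInt (H_integrand a0 a1 a2 a b) 0 T
  = RInt (K_integrand (a0 + a1 + a2 + 1) (S a1) (S a2) a b) 0 (T / (1 + T)).
Proof.
  intros Ha Hb HT.
  rewrite (RInt_ext _ (fun x => scal (/ (1 + x) ^ 2)
             (K_integrand (a0 + a1 + a2 + 1) (S a1) (S a2) a b (x / (1 + x))))).
  2: { intros x Hx. interval_bounds Hx. apply H_integrand_subst; auto; lra. }
  rewrite (@RInt_comp R_CompleteNormedModule _ (fun x => x / (1 + x))).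
  - f_equal. field.
  - intros x Hx. interval_bounds Hx. apply continuous_K_integrand; auto.
    now apply div_one_add_unit_interval.
  - intros x Hx. interval_bounds Hx. split.
    + auto_derive; [lra | field; lra].
    + apply (@ex_derive_continuous R_AbsRing R_NormedModule). auto_derive.
      simpl. apply Rgt_not_eq. nra.
Qed.

Lemma K_sub_RInt_bound (n p q : nat) (a b : R) : 0 < a -> 0 < b ->
  exists B, 0 < B /\ forall s, 0 <= s <= 1 ->
    Rabs (RInt (K_integrand n p q a b) 0 s - K n p q a b) <= B * (1 - s).
Proof.
  intros Ha Hb. destruct (K_integrand_bounded n p q a b Ha Hb) as [B [HB HBt]].
  exists B. split; [exact HB|]. intros s Hs. unfold K.
  rewrite <- (@RInt_Chasles R_CompleteNormedModule _ 0 s 1)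
    by (apply ex_RInt_K_integrand; auto; lra).
  replace (RInt (K_integrand n p q a b) 0 s
           - plus (RInt (K_integrand n p q a b) 0 s) (RInt (K_integrand n p q a b) s 1))
    with (- RInt (K_integrand n p q a b) s 1) by (unfold plus; simpl; ring).
  rewrite Rabs_Ropp, Rmult_comm.
  apply abs_RInt_le_const; [lra | apply ex_RInt_K_integrand; auto; lra |].
  intros t Ht. apply HBt. lra.
Qed.

Lemma improper_H_integrand (a0 a1 a2 : nat) (a b : R) : 0 < a -> 0 < b ->
  improper_int_0_inf (H_integrand a0 a1 a2 a b) (K (a0 + a1 + a2 + 1) (S a1) (S a2) a b).
Proof.
  intros Ha Hb eps Heps.
  destruct (K_sub_RInt_bound (a0 + a1 + a2 + 1) (S a1) (S a2) a b Ha Hb) as [B [HB HBs]].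
  exists (B / eps). intros T HT. apply Rge_le in HT.
  assert (HT0 : 0 <= T) by (apply (Rle_trans _ (B / eps)); [apply Rlt_le, Rdiv_lt_0_compat|]; lra).
  exists (ex_RInt_Reals_0 _ _ _ (ex_RInt_H_integrand a0 a1 a2 a b T Ha Hb HT0)).
  rewrite <- RInt_Reals, RInt_H_integrand by auto.
  eapply Rle_lt_trans.
  - now apply HBs, div_one_add_unit_interval.
  - replace (B * (1 - T / (1 + T))) with (B / (1 + T)) by (field; lra).
    apply Rlt_div_l; [lra|].
    apply Rle_div_l in HT; [nra | exact Heps].
Qed.

Lemma H_eq_K (a0 a1 a2 : nat) (a b : R) : 0 < a -> 0 < b ->
  H a0 a1 a2 a b = K (a0 + a1 + a2 + 1) (S a1) (S a2) a b.
Proof. intros Ha Hb. apply the_improper_int_0_inf, improper_H_integrand; auto. Qed.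

Lemma deriv2_ln (y : R) : 0 < y -> deriv (deriv ln) y = - / (y * y).
Proof.
  intros Hy. apply deriv_is_derive.
  apply (is_derive_ext_loc (fun z => / z)).
  - apply (filter_imp (fun x => 0 < x)); [|exact (open_gt 0 y Hy)].
    intros z Hz. symmetry. apply deriv_is_derive, is_derive_Reals, derivable_pt_lim_ln, Hz.
  - auto_derive; [lra | field; lra].
Qed.

Lemma convex_comb3_pos (y0 y1 y2 t1 t2 : R) : 0 < y0 -> 0 < y1 -> 0 < y2 ->
  0 <= t1 -> 0 <= t2 -> t1 + t2 <= 1 -> 0 < (1 - t1 - t2) * y0 + t1 * y1 + t2 * y2.
Proof.
  intros H0 H1 H2 Ht1 Ht2 Ht.
  destruct (Rle_lt_or_eq_dec 0 t1 Ht1) as [Ht1'|<-]; [nra|].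
  destruct (Rle_lt_or_eq_dec 0 t2 Ht2) as [Ht2'|<-]; nra.
Qed.

(* The inner integral of [1,a,b]log: an antiderivative of -1/y(s)^2, y affine in s. *)
Lemma divdiff_ln_inner (a b t : R) : 0 < a -> 0 < b -> 0 <= t <= 1 ->
  Defs.RInt (fun s => deriv (deriv ln) ((1 - t - s) * 1 + t * a + s * b)) 0 (1 - t)
  = - (1 - t) / ((1 + t * (a - 1)) * (a * t + b * (1 - t))).
Proof.
  intros Ha Hb Ht.
  set (y := fun s => (1 - t - s) * 1 + t * a + s * b).
  change (Defs.RInt (fun s => deriv (deriv ln) (y s)) 0 (1 - t)
          = - (1 - t) / ((1 + t * (a - 1)) * (a * t + b * (1 - t)))).
  assert (Hy : forall s, 0 <= s <= 1 - t -> 0 < y s)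
    by (intros s Hs; apply convex_comb3_pos; lra).
  set (c := 1 + t * (a - 1)).
  assert (Hc : 0 < c) by (apply lerp_pos; auto).
  assert (Hint : is_RInt (fun s => - / (y s * y s)) 0 (1 - t)
                   (minus (- (1 - t) / (c * y (1 - t))) (- 0 / (c * y 0)))).
  { apply (@is_RInt_derive R_CompleteNormedModule (fun s => - s / (c * y s))).
    - intros s Hs. interval_bounds Hs. assert (Hys := Hy s Hs).
      unfold y in *. auto_derive; [apply Rmult_integral_contrapositive; lra|].
      unfold c in *. field. split; lra.
    - intros s Hs. interval_bounds Hs. assert (Hys := Hy s Hs).
      apply (@ex_derive_continuous R_AbsRing R_NormedModule). unfold y in *. auto_derive.
      apply Rmult_integral_contrapositive; lra. }
  assert (Heq : forall s, Rmin 0 (1 - t) < s < Rmax 0 (1 - t) ->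
                  - / (y s * y s) = deriv (deriv ln) (y s)).
  { intros s Hs. interval_bounds Hs. rewrite deriv2_ln; auto. apply Hy. lra. }
  rewrite Defs_RInt_eq_RInt by (eapply ex_RInt_ext; [exact Heq | eexists; exact Hint]).
  rewrite <- (RInt_ext _ _ _ _ Heq), (is_RInt_unique _ _ _ _ Hint).
  assert (Hy1 := Hy (1 - t) ltac:(lra)).
  unfold minus, plus, opp, y, c in *; simpl in *. field. split; lra.
Qed.

(* In the outer integral substitute s = (1 - t) / (1 + t (a - 1)), which maps [0,1] onto [1,0]. *)
Lemma Glog_eq_K (a b : R) : 0 < a -> 0 < b -> Glog a b = - K 1 1 1 a b.
Proof.
  intros Ha Hb. unfold Glog, divdiff3.
  set (o := fun t => - (1 - t) / ((1 + t * (a - 1)) * (a * t + b * (1 - t)))).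
  set (g := fun t => (1 - t) / (1 + t * (a - 1))).
  set (dg := fun t => - a / ((1 + t * (a - 1)) * (1 + t * (a - 1)))).
  assert (Hpos : forall t, 0 <= t <= 1 -> 0 < 1 + t * (a - 1) /\ 0 < a * t + b * (1 - t)).
  { intros t Ht. split; [now apply lerp_pos|].
    assert (Hconv := convex_comb3_pos 1 a b t (1 - t) ltac:(lra) Ha Hb ltac:(lra) ltac:(lra) ltac:(lra)).
    lra. }
  assert (Heq : forall t, Rmin 0 1 < t < Rmax 0 1 -> o t =
    Defs.RInt (fun s => deriv (deriv ln) ((1 - t - s) * 1 + t * a + s * b)) 0 (1 - t)).
  { intros t Ht. interval_bounds Ht. rewrite divdiff_ln_inner; auto; lra. }
  assert (Ho : ex_RInt o 0 1).
  { apply (@ex_RInt_continuous R_CompleteNormedModule). intros t Ht. interval_bounds Ht.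
    destruct (Hpos t Ht).
    apply (@ex_derive_continuous R_AbsRing R_NormedModule). unfold o. auto_derive.
    apply Rmult_integral_contrapositive; lra. }
  rewrite Defs_RInt_eq_RInt by (eapply ex_RInt_ext; [exact Heq | exact Ho]).
  rewrite <- (RInt_ext _ _ _ _ Heq).
  rewrite (RInt_ext o (fun t => scal (dg t) (K_integrand 1 1 1 a b (g t)))).
  2: { intros t Ht. interval_bounds Ht. destruct (Hpos t ltac:(lra)).
       unfold o, dg, g, K_integrand, scal; simpl; unfold mult; simpl.
       field. repeat split; lra. }
  rewrite (@RInt_comp R_CompleteNormedModule).
  - replace (g 0) with 1 by (unfold g; field).
    replace (g 1) with 0 by (unfold g; field; lra).
    rewrite <- (@opp_RInt_swap R_CompleteNormedModule); [reflexivity|].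
    apply ex_RInt_K_integrand; auto; lra.
  - intros t Ht. interval_bounds Ht. destruct (Hpos t Ht).
    apply continuous_K_integrand; auto. unfold g.
    split; [apply Rdiv_le_0_compat | rewrite <- Rdiv_le_1]; nra.
  - intros t Ht. interval_bounds Ht. destruct (Hpos t Ht). split.
    + unfold g, dg. auto_derive; [lra | field; lra].
    + apply (@ex_derive_continuous R_AbsRing R_NormedModule). unfold dg. auto_derive.
      apply Rmult_integral_contrapositive; lra.
Qed.

Lemma partials_of_eq_K (F : R -> R -> R) (c : R) (n : nat) (a b : R) : 0 < a -> 0 < b ->
  (forall x y, 0 < x -> 0 < y -> F x y = c * K n 1 1 x y) ->
  pdiff_a F a b /\ pda F a b = - c * K (S n) 2 1 a b /\
  pdiff_b F a b /\ pdb F a b = - c * K (S n) 1 2 a b.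
Proof.
  intros Ha Hb HF.
  assert (Hda : is_derive (fun x => F x b) a (- c * K (S n) 2 1 a b)).
  { apply (is_derive_ext_loc (fun x => c * K n 1 1 x b)).
    - apply (filter_imp (fun x => 0 < x)); [|exact (open_gt 0 a Ha)].
      intros x Hx. symmetry. now apply HF.
    - replace (- c * K (S n) 2 1 a b) with (c * (- INR 1 * K (S n) 2 1 a b)) by (simpl; ring).
      now apply is_derive_scal, is_derive_K_a. }
  assert (Hdb : is_derive (fun y => F a y) b (- c * K (S n) 1 2 a b)).
  { apply (is_derive_ext_loc (fun y => c * K n 1 1 a y)).
    - apply (filter_imp (fun y => 0 < y)); [|exact (open_gt 0 b Hb)].
      intros y Hy. symmetry. now apply HF.
    - replace (- c * K (S n) 1 2 a b) with (c * (- INR 1 * K (S n) 1 2 a b)) by (simpl; ring).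
      now apply is_derive_scal, is_derive_K_b. }
  unfold pdiff_a, pdiff_b, pda, pdb. repeat split.
  - eexists. apply is_derive_Reals, Hda.
  - now apply deriv_is_derive.
  - eexists. apply is_derive_Reals, Hdb.
  - now apply deriv_is_derive.
Qed.

Lemma Dop_Glog_add_2 (a b : R) : 0 < a -> 0 < b -> Dop Glog a b + 2 * Glog a b = - K 2 1 1 a b.
Proof.
  intros Ha Hb.
  destruct (partials_of_eq_K Glog (-1) 1 a b Ha Hb) as (_ & Hda & _ & Hdb).
  { intros x y Hx Hy. rewrite Glog_eq_K by auto. ring. }
  unfold Dop. rewrite Hda, Hdb, Glog_eq_K by auto.
  assert (HE := K_euler 1 a b Ha Hb). simpl INR in HE. lra.
Qed.

Theorem mainTheorem17 : forall a b : R, 0 < a -> 0 < b ->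
  (exists l, improper_int_0_inf (H_integrand 0 0 0 a b) l) /\
  (exists l, improper_int_0_inf (H_integrand 0 1 0 a b) l) /\
  (exists l, improper_int_0_inf (H_integrand 1 0 0 a b) l) /\
  (exists l, improper_int_0_inf (H_integrand 2 0 0 a b) l) /\
  (exists l, improper_int_0_inf (H_integrand 1 1 0 a b) l) /\
  H 0 0 0 a b = - Glog a b /\
  pdiff_a (H 0 0 0) a b /\ H 0 1 0 a b = - pda (H 0 0 0) a b /\
  pdiff_b (H 0 0 0) a b /\
  H 1 0 0 a b = Dop (H 0 0 0) a b + 2 * H 0 0 0 a b /\
  pdiff_a (H 1 0 0) a b /\ pdiff_b (H 1 0 0) a b /\
  H 2 0 0 a b = / 2 * (Dop (H 1 0 0) a b + 3 * H 1 0 0 a b) /\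
  pdiff_a Glog a b /\ pdiff_b Glog a b /\
  pdiff_a (fun a' b' => Dop Glog a' b' + 2 * Glog a' b') a b /\
  pdiff_b (fun a' b' => Dop Glog a' b' + 2 * Glog a' b') a b /\
  H 2 0 0 a b =
    - / 2 * (Dop (fun a' b' => Dop Glog a' b' + 2 * Glog a' b') a b
             + 3 * (Dop Glog a b + 2 * Glog a b)) /\
  H 1 1 0 a b = - pda (H 1 0 0) a b.
Proof.
  intros a b Ha Hb.
  destruct (partials_of_eq_K (H 0 0 0) 1 1 a b Ha Hb) as (PA0 & DA0 & PB0 & DB0).
  { intros x y Hx Hy. rewrite Rmult_1_l. now apply H_eq_K. }
  destruct (partials_of_eq_K (H 1 0 0) 1 2 a b Ha Hb) as (PA1 & DA1 & PB1 & DB1).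
  { intros x y Hx Hy. rewrite Rmult_1_l. now apply H_eq_K. }
  destruct (partials_of_eq_K Glog (-1) 1 a b Ha Hb) as (PAG & _ & PBG & _).
  { intros x y Hx Hy. rewrite Glog_eq_K by auto. ring. }
  destruct (partials_of_eq_K (fun a' b' => Dop Glog a' b' + 2 * Glog a' b') (-1) 2 a b Ha Hb)
    as (PAP & DAP & PBP & DBP).
  { intros x y Hx Hy. rewrite Dop_Glog_add_2 by auto. ring. }
  assert (E1 := K_euler 1 a b Ha Hb). assert (E2 := K_euler 2 a b Ha Hb). simpl INR in E1, E2.
  assert (HG := Dop_Glog_add_2 a b Ha Hb).
  unfold Dop in *. rewrite DA0, DB0, DA1, DB1, DAP, DBP, HG, Glog_eq_K by auto.
  rewrite !H_eq_K by auto. simpl Nat.add.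
  repeat split; auto; try lra; eexists; apply improper_H_integrand; auto.
Qed.
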